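(* For every integer $n\ge1$, the 2-dimensional substitution $\omega'_n:\Omega'_n\to\Omega'_n$ satisfies $\Omega_n\subseteq\overline{\omega'_n(\Omega'_n)}^{\sigma}:=\{\sigma^{\mathbf k}\omega'_n(x)\mid\mathbf k\in\mathbb Z^2,\ x\in\Omega'_n\}$.
   Context: Write $\bar m=m+1$. $V_n=\{(v_0,v_1,v_2)\in\mathbb{Z}^3: 0\le v_0\le v_1\le 1,\ v_1\le v_2\le n+1\}$, elements written as words $v_0v_1v_2$. A Wang tile is $t=(a,b,c,d)$ with $\mathrm{RIGHT}(t)=a$, $\mathrm{TOP}(t)=b$, $\mathrm{LEFT}(t)=c$, $\mathrm{BOTTOM}(t)=d$; $\hat t=(b,a,d,c)$, $\hat S=\{\hat t:t\in S\}$. Define (as (right, top, left, bottom)): $W_n=\{(11(i+1),11(j+1),11i,11j):1\le i,j\le n\}$; $b_n^i=(00(i+1),111,00i,11n)$, $B'_n=\{b_n^i:0\le i\le n\}$, $B_n=\{b_n^i:0\le i\le n-1\}$; $G_n=\{(01(i+1),111,00i,11(n+1)):0\le i\le n\}$; $Y_n=\{(01(i+1),112,01i,11(n+1)):1\le i\le n\}$; $A_n=\{(00(i+1),112,01i,11n):1\le i\le n\}$; $j_n^{k,l,r,s}=((0,k,l),(0,r,s),(0,s,r+n),(0,l,k+n))$ for $(k,l),(r,s)\in\{(0,0),(0,1),(1,1)\}$; $J'_n$ is the set of these 9 tiles and $J_n=J'_n\setminus\{j_n^{0,0,1,1},j_n^{1,1,0,0}\}$. $\mathcal T'_n=W_n\cup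 B'_n\cup G_n\cup Y_n\cup A_n\cup\hat B'_n\cup\hat G_n\cup\hat Y_n\cup\hat A_n\cup J'_n$ and $\mathcal T_n=W_n\cup B_n\cup G_n\cup Y_n\cup\hat B_n\cup\hat G_n\cup\hat Y_n\cup J_n$. $\Omega'_n$ (resp. $\Omega_n$) is the set of configurations $x:\mathbb Z^2\to\mathcal T'_n$ (resp. $\mathcal T_n$) with $\mathrm{RIGHT}(x(\mathbf m))=\mathrm{LEFT}(x(\mathbf m+\mathbf e_1))$ and $\mathrm{TOP}(x(\mathbf m))=\mathrm{BOTTOM}(x(\mathbf m+\mathbf e_2))$; $(\sigma^{\mathbf k}x)_{\mathbf m}=x_{\mathbf m+\mathbf k}$. Labels of a valid rectangular pattern: bottom/top labels read left to right along bottom/top row, left/right labels read bottom to top along left/right column. $\tau_n:V_n\to V_n^*$ is $\tau_n(xyz)=(0,x-y+1,n)\cdot(11n)^{z-x-1}\cdot(11\bar n)^{n+1-z}$ if $x\ne z$, and $\tau_n(xyz)=(0,x-y+1,n+1)\cdot(11\bar n)^{n-z}$ if $x=z$. For $t=(\alpha,\beta,u,v)\in\mathcal T'_n$, $\omega'_n(t)$ is the unique valid rectangular pattern over $\mathcal T'_n$ with right, top, left, bottom labels $\tau_n(\alpha),\tau_n(\beta),\tau_n(u),\tau_n(v)$. For $x\in\Omega'_n$, $\omega'_n(x)$ is the configuration obtained by concatenating the patterns $\omega'_n(x_{\mathbf m})$ according to the positions $\mathbf m$, with the lower-left cell of $\omega'_n(x_{\mathbf 0})$ at the origin; it lies in $\Omega'_n$.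 *)

From Stdlib Require Import ZArith List.
Import ListNotations.
Open Scope Z_scope.

Definition V := (Z * Z * Z)%type.

Definition in_Vn (n : Z) (v : V) : Prop :=
  let '(v0, v1, v2) := v in 0 <= v0 <= v1 /\ v1 <= 1 /\ v1 <= v2 <= n + 1.

Definition tile := (V * V * V * V)%type.
Definition mkT (a b c d : V) : tile := (a, b, c, d).
Definition RIGHT (t : tile) : V := let '(a, _, _, _) := t in a.
Definition TOP (t : tile) : V := let '(_, b, _, _) := t in b.
Definition LEFT (t : tile) : V := let '(_, _, c, _) := t in c.
Definition BOTTOM (t : tile) : V := let '(_, _, _, d) := t in d.

Definition hat (t : tile) : tile := mkT (TOP t) (RIGHT t) (BOTTOM t) (LEFT t).

Definition tileset := tile -> Prop.
Definition hatS (S : tileset) : tileset := fun t => exists u, S u /\ t = hat u.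
Definition unionS (S1 S2 : tileset) : tileset := fun t => S1 t \/ S2 t.

Definition Wn (n : Z) : tileset := fun t => exists i j, 1 <= i <= n /\ 1 <= j <= n /\
  t = mkT (1,1,i+1) (1,1,j+1) (1,1,i) (1,1,j).

Definition btile (n i : Z) : tile := mkT (0,0,i+1) (1,1,1) (0,0,i) (1,1,n).
Definition B'n (n : Z) : tileset := fun t => exists i, 0 <= i <= n /\ t = btile n i.
Definition Bn (n : Z) : tileset := fun t => exists i, 0 <= i <= n - 1 /\ t = btile n i.

Definition Gn (n : Z) : tileset := fun t => exists i, 0 <= i <= n /\
  t = mkT (0,1,i+1) (1,1,1) (0,0,i) (1,1,n+1).
Definition Yn (n : Z) : tileset := fun t => exists i, 1 <= i <= n /\
  t = mkT (0,1,i+1) (1,1,2) (0,1,i) (1,1,n+1).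
Definition An (n : Z) : tileset := fun t => exists i, 1 <= i <= n /\
  t = mkT (0,0,i+1) (1,1,2) (0,1,i) (1,1,n).

Definition jtile (n k l r s : Z) : tile := mkT (0,k,l) (0,r,s) (0,s,r+n) (0,l,k+n).
Definition jpair (k l : Z) : Prop := (k, l) = (0, 0) \/ (k, l) = (0, 1) \/ (k, l) = (1, 1).
Definition J'n (n : Z) : tileset := fun t => exists k l r s, jpair k l /\ jpair r s /\
  t = jtile n k l r s.
Definition Jn (n : Z) : tileset := fun t =>
  J'n n t /\ t <> jtile n 0 0 1 1 /\ t <> jtile n 1 1 0 0.

Definition T'n (n : Z) : tileset := fun t =>
  Wn n t \/ B'n n t \/ Gn n t \/ Yn n t \/ An n t \/
  hatS (B'n n) t \/ hatS (Gn n) t \/ hatS (Yn n) t \/ hatS (An n) t \/ J'n n t.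
Definition Tn (n : Z) : tileset := fun t =>
  Wn n t \/ Bn n t \/ Gn n t \/ Yn n t \/
  hatS (Bn n) t \/ hatS (Gn n) t \/ hatS (Yn n) t \/ Jn n t.

Definition config := Z -> Z -> tile.
Definition valid_config (S : tileset) (x : config) : Prop :=
  forall a b, S (x a b) /\ RIGHT (x a b) = LEFT (x (a + 1) b) /\
              TOP (x a b) = BOTTOM (x a (b + 1)).
Definition Omega'n (n : Z) (x : config) : Prop := valid_config (T'n n) x.
Definition Omegan (n : Z) (x : config) : Prop := valid_config (Tn n) x.

Definition sigma_shift (k1 k2 : Z) (x : config) : config := fun a b => x (a + k1) (b + k2).

Definition tau (n : Z) (v : V) : list V :=
  let '(x, y, z) := v in
  if x =? z then (0, x - y + 1, n + 1) :: repeat (1, 1, n + 1) (Z.to_nat (n - z))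
  else (0, x - y + 1, n) :: (repeat (1, 1, n) (Z.to_nat (z - x - 1))
                             ++ repeat (1, 1, n + 1) (Z.to_nat (n + 1 - z))).

Definition dfltV : V := (0, 0, 0).

(* p is a valid rectangular pattern of width w, height h over T'_n with
   right, top, left, bottom labels R, T, L, B (cells indexed (i,j),
   0 <= i < w, 0 <= j < h, (0,0) = lower-left cell). *)
Definition valid_pattern (n : Z) (w h : nat) (p : nat -> nat -> tile)
    (R T L B : list V) : Prop :=
  length B = w /\ length T = w /\ length L = h /\ length R = h /\
  (forall i j, (i < w)%nat -> (j < h)%nat -> T'n n (p i j)) /\
  (forall i j, (S i < w)%nat -> (j < h)%nat -> RIGHT (p i j) = LEFT (p (S i) j)) /\
  (forall i j, (i < w)%nat -> (S j < h)%nat -> TOP (p i j) = BOTTOM (p i (S j))) /\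
  (forall i, (i < w)%nat -> BOTTOM (p i 0%nat) = nth i B dfltV) /\
  (forall i, (i < w)%nat -> TOP (p i (h - 1)%nat) = nth i T dfltV) /\
  (forall j, (j < h)%nat -> LEFT (p 0%nat j) = nth j L dfltV) /\
  (forall j, (j < h)%nat -> RIGHT (p (w - 1)%nat j) = nth j R dfltV).

(* omega'_n(t): the patterns satisfying this are the (unique) pattern omega'_n(t). *)
Definition is_omega'_tile (n : Z) (t : tile) (w h : nat) (p : nat -> nat -> tile) : Prop :=
  valid_pattern n w h p (tau n (RIGHT t)) (tau n (TOP t)) (tau n (LEFT t)) (tau n (BOTTOM t)).

(* Offsets of the blocks when concatenating. *)
Fixpoint psum (f : Z -> Z) (k : nat) : Z :=
  match k with O => 0 | S k' => psum f k' + f (Z.of_nat k') end.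
Fixpoint nsum (f : Z -> Z) (k : nat) : Z :=
  match k with O => 0 | S k' => nsum f k' + f (- Z.of_nat k) end.
Definition offset (f : Z -> Z) (c : Z) : Z :=
  if 0 <=? c then psum f (Z.to_nat c) else - nsum f (Z.to_nat (- c)).

(* width of block column c and height of block row r of omega'_n(x) *)
Definition colw (n : Z) (x : config) (c : Z) : nat := length (tau n (BOTTOM (x c 0))).
Definition rowh (n : Z) (x : config) (r : Z) : nat := length (tau n (LEFT (x 0 r))).

(* z = omega'_n(x): the block at position m = (m1,m2), whose lower-left cell is
   at (offset colw m1, offset rowh m2), is the pattern omega'_n(x_m);
   the lower-left cell of omega'_n(x_0) is at the origin. *)
Definition is_omega'_config (n : Z) (x z : config) : Prop :=
  forall m1 m2,
    is_omega'_tile n (x m1 m2) (colw n x m1) (rowh n x m2)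
      (fun i j => z (offset (fun c => Z.of_nat (colw n x c)) m1 + Z.of_nat i)
                    (offset (fun r => Z.of_nat (rowh n x r)) m2 + Z.of_nat j)).

(* In a configuration [y] of Omega_n the [v0]-components of the labels are
   constant along columns and along rows, so columns and rows have a type 0 or 1.
   Along a row of type 1 the [v2]-component grows by one across each column of
   type 1 and stays below [n + 2], so the columns of type 0 are [n] or [n + 1]
   apart, and so are the rows of type 0.  These columns and rows cut [y] into
   blocks with junction tiles at the corners.  Along a side of a block the
   [v1]-labels form a monotone 0/1 sequence, so each side spells [tau n] of a
   label; comparing opposite sides across the white tiles shows that the four
   labels form a tile of T'_n.  A valid pattern is determined by its left and
   bottom labels, so the block is the image of that tile under [omega'_n], and
   the tiles of all blocks form the configuration [x] with [omega'_n(x)] a shift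
   of [y]. *)

From Stdlib Require Import ZArith List Lia Wf_nat.
From Stdlib Require Import Classical IndefiniteDescription FunctionalExtensionality.
Open Scope Z_scope.

(** * Tiles of T_n and T'_n *)

Definition v0 (v : V) : Z := fst (fst v).
Definition v1 (v : V) : Z := snd (fst v).
Definition v2 (v : V) : Z := snd v.

Lemma in_Vn_proj n v : in_Vn n v -> 0 <= v0 v <= v1 v /\ v1 v <= 1 /\ v1 v <= v2 v <= n + 1.
Proof. destruct v as [[x y] z]; exact (fun H => H). Qed.

Definition white_tile (i j : Z) : tile := mkT (1,1,i+1) (1,1,j+1) (1,1,i) (1,1,j).
Definition row_tile (n s s' i : Z) : tile := mkT (0,s',i+1) (1,1,1+s) (0,s,i) (1,1,n+s').
Definition col_tile (n s s' i : Z) : tile := mkT (1,1,1+s) (0,s',i+1) (1,1,n+s') (0,s,i).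

Inductive tile_form (n : Z) (row_ok : Z -> Z -> Z -> Prop) : tile -> Prop :=
| form_white i j : 1 <= i <= n -> 1 <= j <= n -> tile_form n row_ok (white_tile i j)
| form_row s s' i : row_ok s s' i -> tile_form n row_ok (row_tile n s s' i)
| form_col s s' i : row_ok s s' i -> tile_form n row_ok (col_tile n s s' i)
| form_junction k l r s :
    0 <= k <= l -> l <= 1 -> 0 <= r <= s -> s <= 1 -> tile_form n row_ok (jtile n k l r s).

Definition T'n_row (n s s' i : Z) : Prop := 0 <= s <= 1 /\ 0 <= s' <= 1 /\ s <= i <= n.
(* [Tn_form n] contains T_n; of the restrictions defining T_n it keeps only
   [s <= s'] for row and column tiles, which is all the argument needs. *)
Definition Tn_row (n s s' i : Z) : Prop := T'n_row n s s' i /\ s <= s'.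

Definition Tn_form (n : Z) : tileset := tile_form n (Tn_row n).
Definition T'n_form (n : Z) : tileset := tile_form n (T'n_row n).

Lemma jpair_iff k l : jpair k l <-> 0 <= k <= l /\ l <= 1.
Proof.
  unfold jpair; split.
  - intros [E|[E|E]]; injection E; lia.
  - intros H; assert (k = 0 /\ l = 0 \/ k = 0 /\ l = 1 \/ k = 1 /\ l = 1)
      as [[-> ->]|[[-> ->]|[-> ->]]] by lia; auto.
Qed.

Ltac tile_eq :=
  unfold white_tile, row_tile, col_tile, jtile, hat, mkT; cbn -[Z.add]; repeat f_equal; lia.

(* The constructor is read off the [v0]-types of the labels. *)
Ltac solve_tile_form :=
  unfold Tn_form, T'n_form, Tn_row, T'n_row in *;
  lazymatch goal with
  | |- tile_form ?n _ (mkT (1,1,_) (1,1,_) (1,1,?i) (1,1,?j)) =>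
      replace (mkT _ _ _ _) with (white_tile i j) by tile_eq; apply form_white; lia
  | |- tile_form ?n _ (mkT (0,?k,?l) (0,?r,?s) _ _) =>
      replace (mkT _ _ _ _) with (jtile n k l r s) by tile_eq; apply form_junction; lia
  | |- tile_form ?n _ (mkT (0,?s',_) _ (0,?s,?i) _) =>
      replace (mkT _ _ _ _) with (row_tile n s s' i) by tile_eq; apply form_row; lia
  | |- tile_form ?n _ (mkT _ (0,?s',_) _ (0,?s,?i)) =>
      replace (mkT _ _ _ _) with (col_tile n s s' i) by tile_eq; apply form_col; lia
  end.

Lemma Tn_form_of_Tn n t : Tn n t -> Tn_form n t.
Proof.
  unfold Tn, Wn, Bn, Gn, Yn, hatS, Jn, J'n, btile.
  intros [H|[H|[H|[H|[H|[H|[H|H]]]]]]];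
    repeat match goal with
    | H : exists _, _ |- _ => destruct H
    | H : _ /\ _ |- _ => destruct H
    end; subst; rewrite ?jpair_iff in *; unfold jtile, hat; cbn; solve_tile_form.
Qed.

Lemma T'n_form_of_T'n n t : T'n n t -> T'n_form n t.
Proof.
  unfold T'n, Wn, B'n, Gn, Yn, An, hatS, J'n, btile.
  intros [H|[H|[H|[H|[H|[H|[H|[H|[H|H]]]]]]]]];
    repeat match goal with
    | H : exists _, _ |- _ => destruct H
    | H : _ /\ _ |- _ => destruct H
    end; subst; rewrite ?jpair_iff in *; unfold jtile, hat; cbn; solve_tile_form.
Qed.

Lemma T'n_of_form n t : T'n_form n t -> T'n n t.
Proof.
  unfold T'n, Wn, B'n, Gn, Yn, An, hatS, J'n, btile.
  intros [i j Hi Hj|s s' i Hrow|s s' i Hrow|k l r s Hk Hl Hr Hs]; unfold T'n_row in *.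
  - left; exists i, j; auto.
  - assert (s = 0 /\ s' = 0 \/ s = 0 /\ s' = 1 \/ s = 1 /\ s' = 1 \/ s = 1 /\ s' = 0)
      as [[-> ->]|[[-> ->]|[[-> ->]|[-> ->]]]] by lia.
    + right; left; exists i; split; [lia | tile_eq].
    + do 2 right; left; exists i; split; [lia | tile_eq].
    + do 3 right; left; exists i; split; [lia | tile_eq].
    + do 4 right; left; exists i; split; [lia | tile_eq].
  - assert (s = 0 /\ s' = 0 \/ s = 0 /\ s' = 1 \/ s = 1 /\ s' = 1 \/ s = 1 /\ s' = 0)
      as [[-> ->]|[[-> ->]|[[-> ->]|[-> ->]]]] by lia.
    + do 5 right; left; eexists; split; [exists i; split; [lia | reflexivity] | tile_eq].
    + do 6 right; left; eexists; split; [exists i; split; [lia | reflexivity] | tile_eq].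
    + do 7 right; left; eexists; split; [exists i; split; [lia | reflexivity] | tile_eq].
    + do 8 right; left; eexists; split; [exists i; split; [lia | reflexivity] | tile_eq].
  - do 9 right; exists k, l, r, s; rewrite !jpair_iff; auto.
Qed.

Lemma tile_form_mono n (R R' : Z -> Z -> Z -> Prop) t :
  (forall s s' i, R s s' i -> R' s s' i) -> tile_form n R t -> tile_form n R' t.
Proof. intros HR []; constructor; auto. Qed.

Lemma T'n_form_of_Tn_form n t : Tn_form n t -> T'n_form n t.
Proof. apply tile_form_mono; intros s s' i []; auto. Qed.

Lemma tile_form_hat n R t : tile_form n R t -> tile_form n R (hat t).
Proof.
  intros [i j Hi Hj|s s' i Hrow|s s' i Hrow|k l r s Hk Hl Hr Hs].
  - exact (form_white n R j i Hj Hi).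
  - exact (form_col n R s s' i Hrow).
  - exact (form_row n R s s' i Hrow).
  - exact (form_junction n R r s k l Hr Hs Hk Hl).
Qed.

Lemma tile_form_types n R t : tile_form n R t ->
  v0 (RIGHT t) = v0 (LEFT t) /\ v0 (TOP t) = v0 (BOTTOM t) /\
  0 <= v0 (LEFT t) <= 1 /\ 0 <= v0 (BOTTOM t) <= 1.
Proof. intros []; cbn; lia. Qed.

Lemma tile_form_step n R t : tile_form n R t -> v0 (BOTTOM t) = 1 ->
  v2 (RIGHT t) = v2 (LEFT t) + 1.
Proof. intros []; cbn; lia. Qed.

Lemma T'n_form_in_Vn n t : 1 <= n -> T'n_form n t ->
  in_Vn n (RIGHT t) /\ in_Vn n (TOP t) /\ in_Vn n (LEFT t) /\ in_Vn n (BOTTOM t).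
Proof. intros Hn []; unfold T'n_row in *; cbn -[Z.add]; lia. Qed.

Lemma T'n_form_determined n t t' : T'n_form n t -> T'n_form n t' ->
  LEFT t = LEFT t' -> BOTTOM t = BOTTOM t' -> t = t'.
Proof.
  intros [] [] HL HB; cbn in HL, HB; injection HL; injection HB; intros;
    unfold T'n_row in *; subst; try lia; tile_eq.
Qed.

Lemma T'n_form_of_label_rules n a b c d : 1 <= n ->
  in_Vn n a -> in_Vn n b -> in_Vn n c -> in_Vn n d -> v0 a = v0 c -> v0 b = v0 d ->
  (v0 a = 1 -> v0 b = 1 -> v2 a = v2 c + 1 /\ v2 b = v2 d + 1) ->
  (v0 a = 0 -> v0 b = 1 -> v2 a = v2 c + 1 /\ v2 b = 1 + v1 c /\ v2 d = n + v1 a) ->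
  (v0 a = 1 -> v0 b = 0 -> v2 b = v2 d + 1 /\ v2 a = 1 + v1 d /\ v2 c = n + v1 b) ->
  (v0 a = 0 -> v0 b = 0 -> v2 a = v1 d /\ v2 d = n + v1 a /\ v2 b = v1 c /\ v2 c = n + v1 b) ->
  T'n_form n (mkT a b c d).
Proof.
  destruct a as [[a0 a1] a2], b as [[b0 b1] b2], c as [[c0 c1] c2], d as [[d0 d1] d2].
  unfold in_Vn, v0, v1, v2; cbn -[Z.add]. intros Hn Ha Hb Hc Hd -> -> HW HR HC HJ.
  assert (c0 = 0 \/ c0 = 1) as [-> | ->] by lia; assert (d0 = 0 \/ d0 = 1) as [-> | ->] by lia.
  - destruct (HJ eq_refl eq_refl).
    replace (mkT _ _ _ _) with (jtile n a1 a2 b1 b2) by tile_eq; apply form_junction; lia.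
  - destruct (HR eq_refl eq_refl).
    replace (mkT _ _ _ _) with (row_tile n c1 a1 c2) by tile_eq.
    apply form_row; unfold T'n_row; lia.
  - destruct (HC eq_refl eq_refl).
    replace (mkT _ _ _ _) with (col_tile n d1 b1 d2) by tile_eq.
    apply form_col; unfold T'n_row; lia.
  - destruct (HW eq_refl eq_refl).
    replace (mkT _ _ _ _) with (white_tile c2 d2) by tile_eq; apply form_white; lia.
Qed.

(** * Threshold sequences *)

Definition step_at (c i : Z) : Z := if i <=? c then 0 else 1.

Lemma step_at_spec c i : (i <= c /\ step_at c i = 0) \/ (c < i /\ step_at c i = 1).
Proof. unfold step_at; destruct (Z.leb_spec i c); lia. Qed.

Lemma step_at_le c i : i <= c -> step_at c i = 0.
Proof. destruct (step_at_spec c i); lia. Qed.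

Lemma step_at_gt c i : c < i -> step_at c i = 1.
Proof. destruct (step_at_spec c i); lia. Qed.

Lemma step_at_window c i : i - 1 <= c <= i -> step_at c i = i - c.
Proof. destruct (step_at_spec c i); lia. Qed.

Lemma step_shift_eq a b m : 0 <= a -> a <= m -> 1 <= b <= m + 1 ->
  (forall i, 1 <= i <= m -> step_at a i = step_at b (i + 1)) -> a + 1 = b.
Proof.
  intros Ha Ham Hb H.
  destruct (Z.lt_trichotomy (a + 1) b) as [L|[E|L]]; auto; exfalso.
  - specialize (H (a + 1) ltac:(lia)).
    destruct (step_at_spec a (a + 1)), (step_at_spec b (a + 1 + 1)); lia.
  - specialize (H b ltac:(lia)).
    destruct (step_at_spec a b), (step_at_spec b (b + 1)); lia.
Qed.

Lemma step_shift_jump a b m : 1 <= m ->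
  (forall i, 1 <= i <= m -> step_at a i + 1 = step_at b (i + 1)) -> m <= a /\ b <= 1.
Proof.
  intros Hm H. pose proof (H 1 ltac:(lia)) as H1. pose proof (H m ltac:(lia)) as H2.
  destruct (step_at_spec a m), (step_at_spec b (1 + 1)), (step_at_spec a 1),
    (step_at_spec b (m + 1)); lia.
Qed.

Lemma monotone_01_is_step (g : Z -> Z) w : 0 <= w ->
  (forall i, 1 <= i <= w -> 0 <= g i <= 1) -> (forall i, 1 <= i < w -> g i <= g (i + 1)) ->
  exists c, 0 <= c <= w /\ forall i, 1 <= i <= w -> g i = step_at c i.
Proof.
  intros Hw; pattern w; apply natlike_ind; [| clear w Hw; intros w Hw IH | exact Hw];
    intros Hg Hmono; unfold Z.succ in *.
  - exists 0; split; [lia | intros; lia].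
  - destruct IH as (c & Hc & Hstep); [intros; apply Hg; lia | intros; apply Hmono; lia |].
    destruct (Z.eq_dec (g (w + 1)) 0) as [G0 | G1].
    + exists (w + 1); split; [lia |]. intros i Hi; rewrite step_at_le by lia.
      destruct (Z.eq_dec i (w + 1)) as [-> | Hne]; [exact G0 |].
      assert (g w = 0) by (specialize (Hmono w ltac:(lia)); specialize (Hg w ltac:(lia)); lia).
      rewrite Hstep by lia. apply step_at_le.
      specialize (Hstep w ltac:(lia)); destruct (step_at_spec c w); lia.
    + exists c; split; [lia |]. intros i Hi.
      destruct (Z.eq_dec i (w + 1)) as [-> | Hne]; [| apply Hstep; lia].
      rewrite step_at_gt by lia. specialize (Hg (w + 1) ltac:(lia)); lia.
Qed.

(** * The words [tau n v] *)

Definition seg_label (x e c : Z) : V := (x, x + 1 - e, x + c).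

Definition V_eq_dec (u v : V) : {u = v} + {u <> v}.
Proof. repeat decide equality. Defined.

(* [tau n (x,y,z)] records [x] in its length, [y] in its first letter and [z] in
   the number of letters [11n]. *)
Definition untau (n : Z) (w : list V) : V :=
  let x := n + 1 - Z.of_nat (length w) in
  let h := hd dfltV w in
  (x, x + 1 - v1 h,
   if v2 h =? n + 1 then x else x + 1 + Z.of_nat (count_occ V_eq_dec w (1, 1, n))).

Lemma tau_length n v : 1 <= n -> in_Vn n v -> length (tau n v) = Z.to_nat (n + 1 - v0 v).
Proof.
  destruct v as [[x y] z]; unfold in_Vn, tau, v0; cbn; intros Hn Hv.
  destruct (Z.eqb_spec x z); cbn; rewrite ?length_app, !repeat_length; lia.
Qed.

Lemma untau_tau n v : 1 <= n -> in_Vn n v -> untau n (tau n v) = v.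
Proof.
  intros Hn Hv; unfold untau; rewrite tau_length by assumption.
  destruct v as [[x y] z]; unfold in_Vn, tau, v0, v1, v2 in *; cbn in *.
  replace (n + 1 - Z.of_nat (Z.to_nat (n + 1 - x))) with x by lia.
  destruct (Z.eqb_spec x z) as [<- | Hxz]; cbn.
  - rewrite Z.eqb_refl; f_equal; f_equal; lia.
  - replace (n =? n + 1) with false by (symmetry; apply Z.eqb_neq; lia).
    rewrite count_occ_app, count_occ_repeat_eq, count_occ_repeat_neq
      by (auto; intros E; injection E; lia).
    f_equal; [f_equal|]; lia.
Qed.

Lemma tau_inj n v v' : 1 <= n -> in_Vn n v -> in_Vn n v' -> tau n v = tau n v' -> v = v'.
Proof. intros Hn Hv Hv' E. rewrite <- (untau_tau n v), <- (untau_tau n v'), E; auto. Qed.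

Definition spells (n : Z) (v : V) (len : nat) (f : nat -> V) : Prop :=
  length (tau n v) = len /\ forall i, (i < len)%nat -> nth i (tau n v) dfltV = f i.

Lemma spells_inj n v v' len f : 1 <= n -> in_Vn n v -> in_Vn n v' ->
  spells n v len f -> spells n v' len f -> v = v'.
Proof.
  intros Hn Hv Hv' [L N] [L' N']. apply (tau_inj n); auto.
  apply nth_ext with dfltV dfltV; [congruence|]. intros i Hi. rewrite N, N'; auto; lia.
Qed.

Lemma seg_label_spells n w e c (f : nat -> V) :
  1 <= n -> n <= w <= n + 1 -> 0 <= c <= w -> 0 <= e <= 1 -> n + 1 - w <= e -> 1 - e <= c ->
  f 0%nat = (0, e, n + step_at c 1) ->
  (forall i, (0 < i < Z.to_nat w)%nat -> f i = (1, 1, n + step_at c (Z.of_nat i + 1))) ->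
  in_Vn n (seg_label (n + 1 - w) e c) /\ spells n (seg_label (n + 1 - w) e c) (Z.to_nat w) f.
Proof.
  intros Hn Hw Hc He Hxe Hec F0 FS.
  assert (V : in_Vn n (seg_label (n + 1 - w) e c)) by (unfold seg_label, in_Vn; lia).
  split; [exact V | split].
  - rewrite tau_length by assumption. unfold seg_label, v0; cbn. f_equal; lia.
  - intros [|i] Hi; [rewrite F0 | rewrite FS by lia]; unfold tau, seg_label;
      destruct (Z.eqb_spec (n + 1 - w) (n + 1 - w + c)); cbn -[Z.add step_at].
    + rewrite step_at_gt by lia. f_equal; f_equal; lia.
    + rewrite step_at_le by lia. f_equal; f_equal; lia.
    + rewrite nth_repeat_lt, step_at_gt by lia. f_equal; lia.
    + destruct (Nat.lt_ge_cases i (Z.to_nat (n + 1 - w + c - (n + 1 - w) - 1))).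
      * rewrite app_nth1, nth_repeat_lt, step_at_le by (rewrite ?repeat_length; lia). f_equal; lia.
      * rewrite app_nth2, nth_repeat_lt, step_at_gt; rewrite ?repeat_length; try lia. f_equal; lia.
Qed.

(* The sides of a block have widths [w], [h] and thresholds [cB], [cT], [cL],
   [cR]; [l0], [s0], [l2], [s1] and [r1], [k2], [r3], [k3] are the [v2]- and
   [v1]-labels of its corner junctions.  The block is a white tile if
   [w = h = n], a row tile if [w = n < h], a column tile if [h = n < w] and a
   junction if [w = h = n + 1]. *)
Lemma block_labels_tile_form n w h cB cT cL cR l0 s0 l2 s1 r1 k2 r3 k3 :
  1 <= n -> n <= w <= n + 1 -> n <= h <= n + 1 ->
  0 <= cB <= w -> 0 <= cT <= w -> 0 <= cL <= h -> 0 <= cR <= h ->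
  0 <= r1 <= 1 -> 0 <= k2 <= 1 -> 0 <= r3 <= 1 -> 0 <= k3 <= 1 ->
  r1 + n = l0 + w - 1 -> r3 + n = l2 + w - 1 -> k2 + n = s0 + h - 1 -> k3 + n = s1 + h - 1 ->
  s1 = step_at cB w -> k2 = step_at cT 1 -> l2 = step_at cL h -> r1 = step_at cR 1 ->
  (forall i, 0 < i < w -> step_at cB i + h = n + step_at cT (i + 1)) ->
  (forall j, 0 < j < h -> step_at cL j + w = n + step_at cR (j + 1)) ->
  let a := seg_label (n + 1 - h) s1 cR in let b := seg_label (n + 1 - w) l2 cT in
  let c := seg_label (n + 1 - h) s0 cL in let d := seg_label (n + 1 - w) l0 cB in
  in_Vn n a -> in_Vn n b -> in_Vn n c -> in_Vn n d ->
  T'n_form n (mkT a b c d).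
Proof.
  intros Hn Hw Hh HB HT HL HR Hr1 Hk2 Hr3 Hk3 Eb Et El Er Es1 Ek2 El2 Er1 Rc Rr a b c d Va Vb Vc Vd.
  apply T'n_form_of_label_rules; auto; unfold a, b, c, d, seg_label, in_Vn, v0, v1, v2 in *;
    cbn -[Z.add] in *; try lia.
  - intros Ha0 Hb0; assert (w = n) by lia; assert (h = n) by lia; subst w h.
    pose proof (step_at_spec cT 1); pose proof (step_at_spec cB n);
    pose proof (step_at_spec cL n); pose proof (step_at_spec cR 1).
    assert (cB + 1 = cT).
    { apply (step_shift_eq cB cT (n - 1)); try lia.
      intros i Hi. specialize (Rc i ltac:(lia)). lia. }
    assert (cL + 1 = cR).
    { apply (step_shift_eq cL cR (n - 1)); try lia.
      intros j Hj. specialize (Rr j ltac:(lia)). lia. }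
    lia.
  - intros Ha0 Hb0; assert (h = n + 1) by lia; assert (w = n) by lia; subst w h.
    pose proof (step_at_spec cL (n + 1)); pose proof (step_at_spec cR 1).
    assert (cL + 1 = cR).
    { apply (step_shift_eq cL cR n); try lia. intros j Hj. specialize (Rr j ltac:(lia)). lia. }
    assert (n - 1 <= cB /\ cT <= 1).
    { destruct (Z.eq_dec n 1); [lia|].
      apply (step_shift_jump cB cT (n - 1)); [lia|].
      intros i Hi. specialize (Rc i ltac:(lia)). lia. }
    rewrite step_at_window in Es1, Ek2 by lia. lia.
  - intros Ha0 Hb0; assert (h = n) by lia; assert (w = n + 1) by lia; subst w h.
    pose proof (step_at_spec cB (n + 1)); pose proof (step_at_spec cT 1).
    assert (cB + 1 = cT).
    { apply (step_shift_eq cB cT n); try lia. intros i Hi. specialize (Rc i ltac:(lia)). lia. }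
    assert (n - 1 <= cL /\ cR <= 1).
    { destruct (Z.eq_dec n 1); [lia|].
      apply (step_shift_jump cL cR (n - 1)); [lia|].
      intros j Hj. specialize (Rr j ltac:(lia)). lia. }
    rewrite step_at_window in El2, Er1 by lia. lia.
  - intros Ha0 Hb0; assert (h = n + 1) by lia; assert (w = n + 1) by lia; subst w h.
    assert (n <= cB /\ cT <= 1).
    { apply (step_shift_jump cB cT n); [lia|]. intros i Hi. specialize (Rc i ltac:(lia)). lia. }
    assert (n <= cL /\ cR <= 1).
    { apply (step_shift_jump cL cR n); [lia|]. intros j Hj. specialize (Rr j ltac:(lia)). lia. }
    rewrite step_at_window in Es1, Ek2, El2, Er1 by lia. lia.
Qed.

(** * Enumerating unbounded sets of integers *)

Lemma increasing_cover (E : Z -> Z) : (forall m, E m < E (m + 1)) ->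
  forall a, exists m, E m <= a < E (m + 1).
Proof.
  intros HE.
  assert (up : forall k : nat, exists m, E m <= E 0 + Z.of_nat k < E (m + 1)).
  { induction k as [|k [m Hm]].
    - exists 0; specialize (HE 0); lia.
    - destruct (Z.lt_ge_cases (E 0 + Z.of_nat (S k)) (E (m + 1))).
      + exists m; lia.
      + exists (m + 1); specialize (HE (m + 1)); lia. }
  assert (down : forall k : nat, exists m, E m <= E 0 - Z.of_nat k < E (m + 1)).
  { induction k as [|k [m Hm]].
    - exists 0; specialize (HE 0); lia.
    - destruct (Z.le_gt_cases (E m) (E 0 - Z.of_nat (S k))).
      + exists m; lia.
      + exists (m - 1); specialize (HE (m - 1)); replace (m - 1 + 1) with m in * by lia; lia. }
  intros a; destruct (Z.le_gt_cases (E 0) a).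
  - destruct (up (Z.to_nat (a - E 0))) as [m Hm]; exists m; lia.
  - destruct (down (Z.to_nat (E 0 - a))) as [m Hm]; exists m; lia.
Qed.

Lemma least_above (P : Z -> Prop) a : (exists b, a < b /\ P b) ->
  exists b, a < b /\ P b /\ forall c, a < c < b -> ~ P c.
Proof.
  intros [b [Hab Hb]].
  destruct (dec_inh_nat_subset_has_unique_least_element (fun k => P (a + 1 + Z.of_nat k)))
    as [k [[Hk Hmin] _]].
  - intros k; apply classic.
  - exists (Z.to_nat (b - a - 1)). replace (a + 1 + Z.of_nat (Z.to_nat (b - a - 1))) with b by lia.
    exact Hb.
  - exists (a + 1 + Z.of_nat k); split; [lia | split; [exact Hk |]].
    intros c Hc Pc. specialize (Hmin (Z.to_nat (c - a - 1))).
    replace (a + 1 + Z.of_nat (Z.to_nat (c - a - 1))) with c in Hmin by lia.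
    specialize (Hmin Pc); lia.
Qed.

Lemma greatest_below (P : Z -> Prop) a : (exists b, b < a /\ P b) ->
  exists b, b < a /\ P b /\ forall c, b < c < a -> ~ P c.
Proof.
  intros [b [Hba Hb]].
  destruct (least_above (fun c => P (- c)) (- a)) as (b' & Hb' & Pb' & Hmin).
  - exists (- b); rewrite Z.opp_involutive; split; [lia | exact Hb].
  - exists (- b'); split; [lia | split; [exact Pb' |]].
    intros c Hc Pc; apply (Hmin (- c)); [lia | rewrite Z.opp_involutive; exact Pc].
Qed.

Lemma enumerate_unbounded (P : Z -> Prop) :
  (forall a, exists b, a < b /\ P b) -> (forall a, exists b, b < a /\ P b) ->
  exists E : Z -> Z, (forall m, P (E m)) /\ (forall m, E m < E (m + 1)) /\
    (forall m a, E m < a < E (m + 1) -> ~ P a).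
Proof.
  intros Hup Hdown.
  destruct (@functional_choice _ _ _ (fun a => least_above P a (Hup a))) as [next Hnext].
  destruct (@functional_choice _ _ _ (fun a => greatest_below P a (Hdown a))) as [prev Hprev].
  assert (next_prev : forall a, P a -> next (prev a) = a).
  { intros a Pa. destruct (Hprev a) as (H1 & H2 & H3), (Hnext (prev a)) as (H4 & H5 & H6).
    destruct (Z.lt_trichotomy (next (prev a)) a) as [L|[E|L]]; auto.
    - exfalso; apply (H3 (next (prev a))); auto.
    - exfalso; apply (H6 a); auto. }
  set (E := fun m => if 0 <=? m then Nat.iter (Z.to_nat m) next (next 0)
                     else Nat.iter (Z.to_nat (- m)) prev (next 0)).
  assert (EP : forall m, P (E m)).
  { assert (P (next 0)) by apply Hnext.
    intros m; unfold E; destruct (0 <=? m); induction (Z.to_nat _); cbn; auto;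
      [apply Hnext | apply Hprev]. }
  assert (ES : forall m, E (m + 1) = next (E m)).
  { intros m; unfold E; destruct (Z.leb_spec 0 m), (Z.leb_spec 0 (m + 1)); try lia.
    - replace (Z.to_nat (m + 1)) with (S (Z.to_nat m)) by lia; reflexivity.
    - replace m with (-1) by lia; simpl. rewrite next_prev; auto. apply Hnext.
    - replace (Z.to_nat (- m)) with (S (Z.to_nat (- (m + 1)))) by lia. cbn.
      rewrite next_prev; auto. specialize (EP (m + 1)); unfold E in EP.
      destruct (Z.leb_spec 0 (m + 1)); [lia | exact EP]. }
  exists E; split; [exact EP | split]; intros m; rewrite ES; [apply Hnext |].
  intros a Ha; apply (Hnext (E m)); lia.
Qed.

(** * Configurations of Omega_n *)

Definition transpose (y : config) : config := fun a b => hat (y b a).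

Lemma valid_config_mono (S S' : tileset) y :
  (forall t, S t -> S' t) -> valid_config S y -> valid_config S' y.
Proof. intros HS Hy a b; destruct (Hy a b) as (H1 & H2 & H3); auto. Qed.

Lemma valid_config_transpose (S : tileset) y :
  (forall t, S t -> S (hat t)) -> valid_config S y -> valid_config S (transpose y).
Proof.
  intros HS Hy a b; destruct (Hy b a) as (T & Hh & Hv); unfold transpose; repeat split; auto.
Qed.

Definition col_type (y : config) (a : Z) : Z := v0 (BOTTOM (y a 0)).
Definition row_type (y : config) (b : Z) : Z := v0 (LEFT (y 0 b)).

Definition col_gap (y : config) (p w : Z) : Prop :=
  0 < w /\ col_type y p = 0 /\ col_type y (p + w) = 0 /\
  forall i, 0 < i < w -> col_type y (p + i) = 1.
Definition row_gap (y : config) (q h : Z) : Prop :=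
  0 < h /\ row_type y q = 0 /\ row_type y (q + h) = 0 /\
  forall j, 0 < j < h -> row_type y (q + j) = 1.

Lemma succ_invariant_const (f : Z -> Z) : (forall b, f (b + 1) = f b) -> forall b, f b = f 0.
Proof.
  intros H b; induction b using Z.peano_ind; auto.
  - rewrite <- IHb, <- (H b); f_equal; lia.
  - rewrite <- IHb, <- (H (Z.pred b)); f_equal; lia.
Qed.

(* The monotone 0/1 sequence of [v1]-labels along the segment is encoded by its
   number [c] of zeros. *)
Definition row_segment (n : Z) (y : config) (p q w c : Z) : Prop :=
  0 <= c <= w /\ v1 (RIGHT (y p q)) = step_at c 1 /\ v1 (LEFT (y (p + w) q)) = step_at c w /\
  v2 (LEFT (y (p + w) q)) = v2 (RIGHT (y p q)) + w - 1 /\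
  forall i, 0 < i < w ->
    y (p + i) q = row_tile n (step_at c i) (step_at c (i + 1)) (v2 (RIGHT (y p q)) + i - 1).

(* [t] is the tile whose image under [omega'_n] is the [w x h] block of [y] with
   lower-left cell [(p, q)]. *)
Definition block_of (n : Z) (y : config) (p q w h : Z) (t : tile) : Prop :=
  T'n_form n t /\
  spells n (BOTTOM t) (Z.to_nat w) (fun i => BOTTOM (y (p + Z.of_nat i) q)) /\
  spells n (TOP t) (Z.to_nat w) (fun i => BOTTOM (y (p + Z.of_nat i) (q + h))) /\
  spells n (LEFT t) (Z.to_nat h) (fun j => LEFT (y p (q + Z.of_nat j))) /\
  spells n (RIGHT t) (Z.to_nat h) (fun j => LEFT (y (p + w) (q + Z.of_nat j))).

Section Omega.

Variable n : Z.
Hypothesis hn : 1 <= n.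

Lemma valid_transpose y : valid_config (Tn_form n) y -> valid_config (Tn_form n) (transpose y).
Proof. apply valid_config_transpose, tile_form_hat. Qed.

Lemma labels_in_Vn y a b : valid_config (Tn_form n) y ->
  in_Vn n (RIGHT (y a b)) /\ in_Vn n (TOP (y a b)) /\
  in_Vn n (LEFT (y a b)) /\ in_Vn n (BOTTOM (y a b)).
Proof. intros Hy. apply T'n_form_in_Vn, T'n_form_of_Tn_form, Hy; auto. Qed.

Lemma col_type_spec y a b : valid_config (Tn_form n) y ->
  v0 (BOTTOM (y a b)) = col_type y a /\ 0 <= col_type y a <= 1.
Proof.
  intros Hy. unfold col_type.
  rewrite (succ_invariant_const (fun b => v0 (BOTTOM (y a b)))).
  - split; [reflexivity | apply (tile_form_types n (Tn_row n)), Hy].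
  - intros c. destruct (Hy a c) as (T & _ & <-). apply (tile_form_types n (Tn_row n) _ T).
Qed.

Lemma row_type_spec y a b : valid_config (Tn_form n) y ->
  v0 (LEFT (y a b)) = row_type y b /\ 0 <= row_type y b <= 1.
Proof. intros Hy. exact (col_type_spec (transpose y) b a (valid_transpose y Hy)). Qed.

Lemma right_label_type y a b : valid_config (Tn_form n) y -> v0 (RIGHT (y a b)) = row_type y b.
Proof.
  intros Hy. destruct (row_type_spec y a b Hy) as [<- _].
  apply (tile_form_types n (Tn_row n)), Hy.
Qed.

Lemma row_tile_at y a b : valid_config (Tn_form n) y -> row_type y b = 0 -> col_type y a = 1 ->
  v1 (LEFT (y a b)) <= v1 (LEFT (y (a + 1) b)) /\
  y a b = row_tile n (v1 (LEFT (y a b))) (v1 (LEFT (y (a + 1) b))) (v2 (LEFT (y a b))).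
Proof.
  intros Hy Hr Hc. destruct (Hy a b) as (T & <- & _).
  destruct (row_type_spec y a b Hy) as [HL _]; destruct (col_type_spec y a b Hy) as [HB _].
  destruct T as [| s s' i [_ Hs] | |]; cbn in *; try lia. split; [lia | reflexivity].
Qed.

Lemma junction_at y a b : valid_config (Tn_form n) y -> col_type y a = 0 -> row_type y b = 0 ->
  exists k l r s, 0 <= k <= l /\ l <= 1 /\ 0 <= r <= s /\ s <= 1 /\ y a b = jtile n k l r s.
Proof.
  intros Hy Hc Hr. destruct (Hy a b) as (T & _ & _).
  destruct (row_type_spec y a b Hy) as [HL _]; destruct (col_type_spec y a b Hy) as [HB _].
  destruct T as [| | | k l r s]; cbn in *; try lia. exists k, l, r, s; auto.
Qed.

Lemma right_v2_run y a b m : valid_config (Tn_form n) y -> 0 <= m ->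
  (forall i, 0 < i <= m -> col_type y (a + i) = 1) ->
  v2 (RIGHT (y (a + m) b)) = v2 (RIGHT (y a b)) + m.
Proof.
  intros Hy Hm; pattern m; apply natlike_ind; [| clear m Hm; intros m Hm IH | exact Hm]; intros Hc.
  - rewrite Z.add_0_r; lia.
  - unfold Z.succ in *.
    assert (Hc' : col_type y (a + m + 1) = 1) by (rewrite <- Z.add_assoc; apply Hc; lia).
    rewrite Z.add_assoc, (tile_form_step n (Tn_row n) _ (proj1 (Hy _ _)))
      by (rewrite (proj1 (col_type_spec y _ b Hy)); exact Hc').
    destruct (Hy (a + m) b) as (_ & <- & _).
    rewrite IH by (intros; apply Hc; lia); lia.
Qed.

Lemma top_v2_run y a b m : valid_config (Tn_form n) y -> 0 <= m ->
  (forall j, 0 < j <= m -> row_type y (b + j) = 1) ->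
  v2 (TOP (y a (b + m))) = v2 (TOP (y a b)) + m.
Proof. intros Hy. exact (right_v2_run (transpose y) b a m (valid_transpose y Hy)). Qed.

Lemma zero_col_after y a : valid_config (Tn_form n) y ->
  exists b, a < b <= a + n + 2 /\ col_type y b = 0.
Proof.
  intros Hy. apply NNPP; intros Hno.
  assert (Hc : forall i, 0 < i <= n + 2 -> col_type y (a + i) = 1).
  { intros i Hi. destruct (col_type_spec y (a + i) 0 Hy) as [_ H01].
    destruct (Z.eq_dec (col_type y (a + i)) 0) as [E|E]; [| lia].
    exfalso; apply Hno; exists (a + i); split; [lia | exact E]. }
  pose proof (right_v2_run y a 0 (n + 2) Hy ltac:(lia) Hc) as Hrun.
  destruct (labels_in_Vn y a 0 Hy) as [Va _].
  destruct (labels_in_Vn y (a + (n + 2)) 0 Hy) as [Vb _].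
  apply in_Vn_proj in Va; apply in_Vn_proj in Vb. lia.
Qed.

Lemma zero_cols_unbounded y : valid_config (Tn_form n) y ->
  (forall a, exists b, a < b /\ col_type y b = 0) /\
  (forall a, exists b, b < a /\ col_type y b = 0).
Proof.
  intros Hy; split; intros a.
  - destruct (zero_col_after y a Hy) as (b & Hb & E); exists b; split; [lia | exact E].
  - destruct (zero_col_after y (a - n - 3) Hy) as (b & Hb & E); exists b; split; [lia | exact E].
Qed.

Lemma zero_rows_unbounded y : valid_config (Tn_form n) y ->
  (forall a, exists b, a < b /\ row_type y b = 0) /\
  (forall a, exists b, b < a /\ row_type y b = 0).
Proof. intros Hy. exact (zero_cols_unbounded (transpose y) (valid_transpose y Hy)). Qed.

Lemma row_segment_exists y p q w : valid_config (Tn_form n) y -> row_type y q = 0 ->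
  col_gap y p w -> exists c, row_segment n y p q w c.
Proof.
  intros Hy Hq (Hw & Hp & Hpw & Hint).
  assert (Hleft : forall i, 1 <= i <= w -> LEFT (y (p + i) q) = RIGHT (y (p + (i - 1)) q)).
  { intros i Hi. destruct (Hy (p + (i - 1)) q) as (_ & -> & _).
    replace (p + (i - 1) + 1) with (p + i) by lia; reflexivity. }
  assert (Hv2 : forall i, 1 <= i <= w -> v2 (LEFT (y (p + i) q)) = v2 (RIGHT (y p q)) + i - 1).
  { intros i Hi.
    rewrite Hleft, right_v2_run by (auto; try lia; intros j Hj; apply Hint; lia). lia. }
  destruct (monotone_01_is_step (fun i => v1 (LEFT (y (p + i) q))) w) as (c & Hc & Hstep);
    cbv beta in *; [lia | | |].
  - intros i Hi. destruct (labels_in_Vn y (p + i) q Hy) as (_ & _ & V & _). apply in_Vn_proj in V.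
    rewrite (proj1 (row_type_spec y (p + i) q Hy)) in V. lia.
  - intros i Hi. rewrite Z.add_assoc. apply (row_tile_at y (p + i) q Hy Hq (Hint i ltac:(lia))).
  - exists c. repeat split; try lia.
    + rewrite <- (Hstep 1), Hleft by lia. rewrite Z.sub_diag, Z.add_0_r; reflexivity.
    + apply Hstep; lia.
    + apply Hv2; lia.
    + intros i Hi. rewrite <- Hstep, <- Hstep, <- Hv2 by lia.
      rewrite Z.add_assoc. apply row_tile_at; auto; apply Hint; lia.
Qed.

Lemma row_segment_width y p q w c : valid_config (Tn_form n) y -> row_type y q = 0 ->
  col_gap y p w -> row_segment n y p q w c -> n <= w <= n + 2.
Proof.
  intros Hy Hq (Hw & Hp & Hpw & _) (_ & _ & _ & Hv2 & _).
  destruct (junction_at y p q Hy Hp Hq) as (k & l & r & s & ? & ? & ? & ? & E0).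
  destruct (junction_at y (p + w) q Hy Hpw Hq) as (k' & l' & r' & s' & ? & ? & ? & ? & E1).
  rewrite E0, E1 in Hv2; cbn in Hv2. lia.
Qed.

Lemma wide_row_segment y p q w c : valid_config (Tn_form n) y -> row_type y q = 0 ->
  col_gap y p w -> row_segment n y p q w c -> w = n + 2 -> step_at c 1 = 0 /\ step_at c w = 1.
Proof.
  intros Hy Hq (Hw & Hp & Hpw & _) (_ & H1 & Hw1 & Hv2 & _) Ew.
  destruct (junction_at y p q Hy Hp Hq) as (k & l & r & s & ? & ? & ? & ? & E0).
  destruct (junction_at y (p + w) q Hy Hpw Hq) as (k' & l' & r' & s' & ? & ? & ? & ? & E1).
  rewrite E0, E1 in *; cbn -[Z.add step_at] in *. lia.
Qed.

Lemma type1_row_width y p q w : valid_config (Tn_form n) y -> row_type y q = 1 ->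
  col_gap y p w -> w <= n + 1.
Proof.
  intros Hy Hq (Hw & _ & _ & Hint).
  pose proof (right_v2_run y p q (w - 1) Hy ltac:(lia) ltac:(intros i Hi; apply Hint; lia)) as Hrun.
  destruct (labels_in_Vn y p q Hy) as [Va _].
  destruct (labels_in_Vn y (p + (w - 1)) q Hy) as [Vb _].
  apply in_Vn_proj in Va; apply in_Vn_proj in Vb. rewrite (right_label_type y p q Hy) in Va. lia.
Qed.

(* Across [h - 1] rows of type 1 every column of type 1 gains [h - 1] in [v2]. *)
Lemma row_segments_relation y p q w h c c' : valid_config (Tn_form n) y -> 0 < h ->
  (forall j, 0 < j < h -> row_type y (q + j) = 1) ->
  row_segment n y p q w c -> row_segment n y p (q + h) w c' ->
  forall i, 0 < i < w -> step_at c i + h = n + step_at c' (i + 1).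
Proof.
  intros Hy Hh Hint (_ & _ & _ & _ & Hbot) (_ & _ & _ & _ & Htop) i Hi.
  pose proof (top_v2_run y (p + i) q (h - 1) Hy ltac:(lia) ltac:(intros j Hj; apply Hint; lia))
    as Hrun.
  destruct (Hy (p + i) (q + (h - 1))) as (_ & _ & Hv).
  replace (q + (h - 1) + 1) with (q + h) in Hv by lia.
  rewrite Hv, Hbot, Htop in Hrun by exact Hi. cbn -[Z.add step_at] in Hrun. lia.
Qed.

(* If [w = n + 2], no row of type 1 crosses the gap, so three consecutive rows are
   of type 0; comparing the middle one with its two neighbours gives contradictory
   values of its threshold sequence at 2. *)
Lemma col_gap_width y p w : valid_config (Tn_form n) y -> col_gap y p w -> n <= w <= n + 1.
Proof.
  intros Hy Hgap.
  destruct (proj1 (zero_rows_unbounded y Hy) 0) as (q & _ & Hq).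
  destruct (row_segment_exists y p q w Hy Hq Hgap) as [c0 S0].
  pose proof (row_segment_width y p q w c0 Hy Hq Hgap S0).
  enough (w <> n + 2) by lia. intros Ew.
  assert (next_zero : forall q', row_type y (q' + 1) = 0).
  { intros q'. destruct (row_type_spec y 0 (q' + 1) Hy) as [_ H01].
    destruct (Z.eq_dec (row_type y (q' + 1)) 1) as [E|E]; [| lia].
    pose proof (type1_row_width y p (q' + 1) w Hy E Hgap); lia. }
  destruct (row_segment_exists y p (q + 1) w Hy (next_zero q) Hgap) as [c1 S1].
  destruct (row_segment_exists y p (q + 1 + 1) w Hy (next_zero (q + 1)) Hgap) as [c2 S2].
  pose proof (row_segments_relation y p q w 1 c0 c1 Hy ltac:(lia) ltac:(intros; lia) S0 S1
    1 ltac:(lia)).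
  pose proof (row_segments_relation y p (q + 1) w 1 c1 c2 Hy ltac:(lia) ltac:(intros; lia) S1 S2
    (n + 1) ltac:(lia)).
  destruct (wide_row_segment y p q w c0 Hy Hq Hgap S0 Ew).
  destruct (wide_row_segment y p (q + 1 + 1) w c2 Hy (next_zero (q + 1)) Hgap S2 Ew).
  rewrite Ew in *; replace (n + 1 + 1) with (n + 2) in * by lia.
  pose proof (step_at_spec c1 (1 + 1)).
  assert (n = 1) by lia; subst n. lia.
Qed.

Lemma row_segment_spells y p q w c : valid_config (Tn_form n) y -> row_type y q = 0 ->
  col_gap y p w -> row_segment n y p q w c ->
  let d := seg_label (n + 1 - w) (v2 (RIGHT (y p q))) c in
  in_Vn n d /\ spells n d (Z.to_nat w) (fun i => BOTTOM (y (p + Z.of_nat i) q)).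
Proof.
  intros Hy Hq Hgap S d. pose proof (col_gap_width y p w Hy Hgap) as Hw.
  destruct Hgap as (Hw0 & Hp & Hpw & _), S as (Hc & H1 & _ & Hv2 & Hint).
  destruct (junction_at y p q Hy Hp Hq) as (k & l & r & s & ? & ? & ? & ? & E0).
  destruct (junction_at y (p + w) q Hy Hpw Hq) as (k' & l' & r' & s' & ? & ? & ? & ? & E1).
  unfold d; rewrite E0 in *; rewrite E1 in Hv2; cbn -[Z.add step_at] in *.
  pose proof (step_at_spec c 1).
  apply seg_label_spells; try lia.
  - rewrite Z.add_0_r, E0; cbn -[Z.add step_at]. f_equal; lia.
  - intros i Hi. rewrite Hint by lia. cbn -[Z.add step_at]. reflexivity.
Qed.

Lemma block_tile y p q w h : valid_config (Tn_form n) y -> col_gap y p w -> row_gap y q h ->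
  exists t, block_of n y p q w h t.
Proof.
  intros Hy Hcol Hrow. pose proof (valid_transpose y Hy) as Hy'.
  pose proof (col_gap_width y p w Hy Hcol) as Hw.
  pose proof (col_gap_width (transpose y) q h Hy' Hrow) as Hh.
  pose proof Hcol as (Hw0 & Hp & Hpw & Hcols); pose proof Hrow as (Hh0 & Hq & Hqh & Hrows).
  destruct (row_segment_exists y p q w Hy Hq Hcol) as [cB SB].
  destruct (row_segment_exists y p (q + h) w Hy Hqh Hcol) as [cT ST].
  destruct (row_segment_exists (transpose y) q p h Hy' Hp Hrow) as [cL SL].
  destruct (row_segment_exists (transpose y) q (p + w) h Hy' Hpw Hrow) as [cR SR].
  pose proof (row_segments_relation y p q w h cB cT Hy Hh0 Hrows SB ST) as Rc.
  pose proof (row_segments_relation (transpose y) q p h w cL cR Hy' Hw0 Hcols SL SR) as Rr.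
  destruct (row_segment_spells y p q w cB Hy Hq Hcol SB) as [Vd Sd].
  destruct (row_segment_spells y p (q + h) w cT Hy Hqh Hcol ST) as [Vb Sb].
  destruct (row_segment_spells (transpose y) q p h cL Hy' Hp Hrow SL) as [Vc Sc].
  destruct (row_segment_spells (transpose y) q (p + w) h cR Hy' Hpw Hrow SR) as [Va Sa].
  exists (mkT (seg_label (n + 1 - h) (v2 (TOP (y (p + w) q))) cR)
              (seg_label (n + 1 - w) (v2 (RIGHT (y p (q + h)))) cT)
              (seg_label (n + 1 - h) (v2 (TOP (y p q))) cL)
              (seg_label (n + 1 - w) (v2 (RIGHT (y p q))) cB)).
  split; [| split; [exact Sd | split; [exact Sb | split; [exact Sc | exact Sa]]]].
  destruct SB as (HcB & _ & EB & HB & _), ST as (HcT & ET & _ & HT & _),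
    SL as (HcL & _ & EL & HL & _), SR as (HcR & ER & _ & HR & _).
  unfold transpose in *; cbv beta in *.
  destruct (junction_at y p q Hy Hp Hq) as (k0 & l0 & r0 & s0 & ? & ? & ? & ? & J00).
  destruct (junction_at y (p + w) q Hy Hpw Hq) as (k1 & l1 & r1 & s1 & ? & ? & ? & ? & J10).
  destruct (junction_at y p (q + h) Hy Hp Hqh) as (k2 & l2 & r2 & s2 & ? & ? & ? & ? & J01).
  destruct (junction_at y (p + w) (q + h) Hy Hpw Hqh) as (k3 & l3 & r3 & s3 & ? & ? & ? & ? & J11).
  rewrite J00, J10, J01, J11 in *; cbn -[Z.add step_at seg_label] in *.
  apply (block_labels_tile_form n w h cB cT cL cR l0 s0 l2 s1 r1 k2 r3 k3); auto; lia.
Qed.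

Lemma col_gaps_of_enum y (E : Z -> Z) : valid_config (Tn_form n) y ->
  (forall m, col_type y (E m) = 0) -> (forall m, E m < E (m + 1)) ->
  (forall m a, E m < a < E (m + 1) -> col_type y a <> 0) ->
  forall m, col_gap y (E m) (E (m + 1) - E m).
Proof.
  intros Hy EZ Einc Egap m. specialize (Einc m). repeat split; [lia | apply EZ | |].
  - replace (E m + (E (m + 1) - E m)) with (E (m + 1)) by lia. apply EZ.
  - intros i Hi. destruct (col_type_spec y (E m + i) 0 Hy) as [_ H01].
    specialize (Egap m (E m + i) ltac:(lia)). lia.
Qed.

Lemma row_gaps_of_enum y (F : Z -> Z) : valid_config (Tn_form n) y ->
  (forall m, row_type y (F m) = 0) -> (forall m, F m < F (m + 1)) ->
  (forall m b, F m < b < F (m + 1) -> row_type y b <> 0) ->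
  forall m, row_gap y (F m) (F (m + 1) - F m).
Proof. intros Hy. exact (col_gaps_of_enum (transpose y) F (valid_transpose y Hy)). Qed.

End Omega.

(** * The substitution [omega'_n] *)

Lemma valid_pattern_unique n w h p1 p2 R1 T1 R2 T2 L B :
  valid_pattern n w h p1 R1 T1 L B -> valid_pattern n w h p2 R2 T2 L B ->
  forall i j, (i < w)%nat -> (j < h)%nat -> p1 i j = p2 i j.
Proof.
  intros (_ & _ & _ & _ & V1 & H1 & U1 & B1 & _ & L1 & _)
    (_ & _ & _ & _ & V2 & H2 & U2 & B2 & _ & L2 & _).
  induction i as [|i IHi]; intros j Hi Hj; induction j as [|j IHj];
    apply (T'n_form_determined n); try (apply T'n_form_of_T'n; auto).
  all: first [ rewrite L1, L2 by lia; reflexivity | rewrite B1, B2 by lia; reflexivity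
             | rewrite <- H1, <- H2 by lia; f_equal; apply IHi; lia
             | rewrite <- U1, <- U2 by lia; f_equal; apply IHj; lia ].
Qed.

Lemma block_pattern_valid n y p q w h t : 1 <= n -> valid_config (Tn_form n) y ->
  0 < w -> 0 < h -> block_of n y p q w h t ->
  is_omega'_tile n t (Z.to_nat w) (Z.to_nat h) (fun i j => y (p + Z.of_nat i) (q + Z.of_nat j)).
Proof.
  intros Hn Hy Hw Hh (_ & [LB NB] & [LT NT] & [LL NL] & [LR NR]).
  unfold is_omega'_tile, valid_pattern. repeat split; auto.
  - intros i j _ _. apply T'n_of_form, T'n_form_of_Tn_form, Hy.
  - intros i j _ _. rewrite (proj1 (proj2 (Hy _ _))). f_equal; f_equal; lia.
  - intros i j _ _. rewrite (proj2 (proj2 (Hy _ _))). f_equal; f_equal; lia.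
  - intros i Hi. rewrite NB by lia. f_equal; f_equal; lia.
  - intros i Hi. rewrite NT, (proj2 (proj2 (Hy _ _))) by lia. f_equal; f_equal; lia.
  - intros j Hj. rewrite NL by lia. f_equal; f_equal; lia.
  - intros j Hj. rewrite NR, (proj1 (proj2 (Hy _ _))) by lia. f_equal; f_equal; lia.
Qed.

Lemma offset_eq (g E : Z -> Z) : (forall c, g c = E (c + 1) - E c) ->
  forall m, offset g m = E m - E 0.
Proof.
  intros Hg.
  assert (P : forall k, psum g k = E (Z.of_nat k) - E 0).
  { induction k; cbn [psum]; [cbn; lia |]. rewrite IHk, Hg, Nat2Z.inj_succ, <- Z.add_1_r. lia. }
  assert (N : forall k, nsum g k = E 0 - E (- Z.of_nat k)).
  { induction k; cbn [nsum]; [cbn; lia |]. rewrite IHk, Hg, Nat2Z.inj_succ.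
    replace (- Z.succ (Z.of_nat k) + 1) with (- Z.of_nat k) by lia. lia. }
  intros m. unfold offset. destruct (Z.leb_spec 0 m).
  - rewrite P, Z2Nat.id by lia. reflexivity.
  - rewrite N. replace (- Z.of_nat (Z.to_nat (- m))) with m by lia. lia.
Qed.

Lemma config_choice (P : Z -> Z -> tile -> Prop) :
  (forall a b, exists t, P a b t) -> exists x : config, forall a b, P a b (x a b).
Proof.
  intros H. destruct (functional_choice (fun (ab : Z * Z) t => P (fst ab) (snd ab) t)) as [f Hf].
  - intros [a b]; apply H.
  - exists (fun a b => f (a, b)); intros a b; apply (Hf (a, b)).
Qed.

Section Decomposition.

Variables (n : Z) (y x : config) (E F : Z -> Z).
Hypothesis hn : 1 <= n.
Hypothesis Hy : valid_config (Tn_form n) y.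
Hypothesis E_incr : forall m, E m < E (m + 1).
Hypothesis F_incr : forall m, F m < F (m + 1).
Hypothesis Hx : forall m1 m2,
  block_of n y (E m1) (F m2) (E (m1 + 1) - E m1) (F (m2 + 1) - F m2) (x m1 m2).

Lemma blocks_Omega'n : Omega'n n x.
Proof.
  intros a b. destruct (Hx a b) as (T & _ & Sb & _ & Sr).
  destruct (Hx (a + 1) b) as (T' & _ & _ & Sl' & _). destruct (Hx a (b + 1)) as (T'' & Sb'' & _).
  destruct (T'n_form_in_Vn n _ hn T) as (Vr & Vt & _).
  destruct (T'n_form_in_Vn n _ hn T') as (_ & _ & Vl' & _).
  destruct (T'n_form_in_Vn n _ hn T'') as (_ & _ & _ & Vb'').
  replace (E a + (E (a + 1) - E a)) with (E (a + 1)) in Sr by lia.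
  replace (F b + (F (b + 1) - F b)) with (F (b + 1)) in Sb by lia.
  split; [apply T'n_of_form, T | split; eapply spells_inj; eauto].
Qed.

Lemma blocks_colw c : colw n x c = Z.to_nat (E (c + 1) - E c).
Proof. destruct (Hx c 0) as (_ & [L _] & _). exact L. Qed.

Lemma blocks_rowh r : rowh n x r = Z.to_nat (F (r + 1) - F r).
Proof. destruct (Hx 0 r) as (_ & _ & _ & [L _] & _). exact L. Qed.

Lemma blocks_offsets m1 m2 :
  offset (fun c => Z.of_nat (colw n x c)) m1 = E m1 - E 0 /\
  offset (fun r => Z.of_nat (rowh n x r)) m2 = F m2 - F 0.
Proof.
  split; apply offset_eq; intros c; rewrite ?blocks_colw, ?blocks_rowh;
    [specialize (E_incr c) | specialize (F_incr c)]; lia.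
Qed.

Lemma blocks_pattern m1 m2 :
  is_omega'_tile n (x m1 m2) (colw n x m1) (rowh n x m2)
    (fun i j => y (E m1 + Z.of_nat i) (F m2 + Z.of_nat j)).
Proof.
  rewrite blocks_colw, blocks_rowh.
  apply block_pattern_valid; auto; [specialize (E_incr m1) | specialize (F_incr m2)]; lia.
Qed.

Lemma omega'_blocks_shift : is_omega'_config n x (sigma_shift (E 0) (F 0) y).
Proof.
  intros m1 m2. destruct (blocks_offsets m1 m2) as [-> ->].
  replace (fun i j : nat =>
           sigma_shift (E 0) (F 0) y (E m1 - E 0 + Z.of_nat i) (F m2 - F 0 + Z.of_nat j))
    with (fun i j => y (E m1 + Z.of_nat i) (F m2 + Z.of_nat j)).
  - apply blocks_pattern.
  - unfold sigma_shift. apply functional_extensionality; intros i.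
    apply functional_extensionality; intros j. f_equal; lia.
Qed.

(* On the block containing a cell, [z] and the shifted [y] are valid patterns
   with the same left and bottom labels. *)
Lemma omega'_blocks_unique z : is_omega'_config n x z -> sigma_shift (- E 0) (- F 0) z = y.
Proof.
  intros Hz. apply functional_extensionality; intros a; apply functional_extensionality; intros b.
  destruct (increasing_cover E E_incr a) as [m1 Ha], (increasing_cover F F_incr b) as [m2 Hb].
  specialize (Hz m1 m2). destruct (blocks_offsets m1 m2) as [O1 O2]. rewrite O1, O2 in Hz.
  pose proof (valid_pattern_unique _ _ _ _ _ _ _ _ _ _ _ Hz (blocks_pattern m1 m2)
    (Z.to_nat (a - E m1)) (Z.to_nat (b - F m2))) as U.
  rewrite blocks_colw, blocks_rowh, !Z2Nat.id in U by lia. specialize (U ltac:(lia) ltac:(lia)).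
  unfold sigma_shift. replace (a + - E 0) with (E m1 - E 0 + (a - E m1)) by lia.
  replace (b + - F 0) with (F m2 - F 0 + (b - F m2)) by lia.
  rewrite U. f_equal; lia.
Qed.

End Decomposition.

Theorem proposition6p9 (n : Z) (hn : 1 <= n) :
  forall y : config, Omegan n y ->
    exists (x : config) (k1 k2 : Z),
      Omega'n n x /\
      (exists z, is_omega'_config n x z) /\
      (forall z, is_omega'_config n x z -> sigma_shift k1 k2 z = y).
Proof.
  intros y HTy.
  pose proof (valid_config_mono _ _ y (Tn_form_of_Tn n) HTy) as Hy.
  destruct (zero_cols_unbounded n hn y Hy) as [Cup Cdown].
  destruct (zero_rows_unbounded n hn y Hy) as [Rup Rdown].
  destruct (enumerate_unbounded _ Cup Cdown) as (E & EZ & E_incr & E_gap).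
  destruct (enumerate_unbounded _ Rup Rdown) as (F & FZ & F_incr & F_gap).
  destruct (config_choice (fun m1 m2 =>
      block_of n y (E m1) (F m2) (E (m1 + 1) - E m1) (F (m2 + 1) - F m2))) as [x Hx].
  { intros m1 m2. apply (block_tile n hn); auto;
      [apply (col_gaps_of_enum n) | apply (row_gaps_of_enum n)]; auto. }
  exists x, (- E 0), (- F 0).
  split; [| split; [eexists |]].
  - apply (blocks_Omega'n n y x E F); auto.
  - apply (omega'_blocks_shift n y x E F); auto.
  - apply (omega'_blocks_unique n y x E F); auto.
Qed.
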